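(* Fix real numbers $w>0$ and $c>0$. For each integer $n\ge 3$, let $T_n$ be a binary phylogenetic tree with leaf set $X_n$, $|X_n|=n$, with positive edge lengths and minimum interior edge length $w$, and let $d_n$ be its tree metric. Let $\delta_n(x,y)=d_n(x,y)+\epsilon_{xy}$ for unordered pairs $\{x,y\}\subseteq X_n$, $x\ne y$, where the $\epsilon_{xy}$ are independent normal random variables with mean $0$ and variance $\sigma_n^2=c^2/\log(n)$. Let $P_n$ be the probability that $|\delta_n(x,y)-d_n(x,y)|<\frac{1}{2}w$ holds simultaneously for all pairs of distinct $x,y\in X_n$. Then $P_n\to 0$ as $n\to\infty$ if $c>\frac{1}{4}w$, and $P_n\to 1$ as $n\to\infty$ if $c<\frac14 w$.
   Context: A phylogenetic $X$-tree is a tree whose leaves are bijectively labelled by $X$ and whose interior vertices have degree at least 3; it is binary if all interior vertices have degree 3. Given positive edge lengths, the tree metric $d$ assigns to each pair of leaves the total length of the path between them. An interior edge is an edge not incident to a leaf. $\log$ denotes the natural logarithm. *)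

From HB Require Import structures.
From mathcomp Require Import all_boot all_order all_algebra.
From mathcomp Require Import all_classical all_reals all_analysis.
Set Implicit Arguments. Unset Strict Implicit. Unset Printing Implicit Defensive.
Import Order.TTheory GRing.Theory Num.Theory.
Local Open Scope classical_set_scope.
Local Open Scope ring_scope.

Definition deg (V : finType) (e : rel V) (v : V) : nat := #|[set u | e v u]|.

Definition is_tree (V : finType) (e : rel V) : Prop :=
  [/\ symmetric e, irreflexive e, (forall x y : V, connect e x y) &
      (forall p : seq V, uniq p -> (3 <= size p)%N -> ~~ cycle e p)].

(* Binary phylogenetic X-tree with X = 'I_n: the labelling phi : 'I_n -> V is
   a bijection onto the leaves (degree-1 vertices), every interior
   (non-leaf) vertex has degree 3. *)
Definition binary_phylo_tree (n : nat) (V : finType) (e : rel V)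
    (phi : 'I_n -> V) : Prop :=
  [/\ is_tree e, injective phi,
      (forall v, (v \in codom phi) = (deg e v == 1%N)) &
      (forall v, v \notin codom phi -> deg e v = 3%N)].

Definition interior_edge (V : finType) (e : rel V) (u v : V) : bool :=
  [&& e u v, deg e u != 1%N & deg e v != 1%N].

Definition positive_edge_lengths (R : realType) (V : finType) (e : rel V)
    (l : V -> V -> R) : Prop :=
  forall u v, e u v -> l u v = l v u /\ 0 < l u v.

Definition min_interior_edge_length (R : realType) (V : finType) (e : rel V)
    (l : V -> V -> R) (w : R) : Prop :=
  (forall u v, interior_edge e u v -> w <= l u v) /\
  ((exists u v, interior_edge e u v) ->
     exists u v, interior_edge e u v /\ l u v = w).

Definition walk_length (R : realType) (V : finType) (l : V -> V -> R)
    (x : V) (p : seq V) : R :=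
  \sum_(k <- zip (x :: p) p) l k.1 k.2.

(* d is the tree metric: d x y is the total length of the (unique) path
   between the leaves labelled x and y. *)
Definition is_tree_metric (R : realType) (n : nat) (V : finType) (e : rel V)
    (phi : 'I_n -> V) (l : V -> V -> R) (d : 'I_n -> 'I_n -> R) : Prop :=
  forall (x y : 'I_n) (p : seq V),
    path e (phi x) p -> last (phi x) p = phi y -> uniq (phi x :: p) ->
    d x y = walk_length l (phi x) p.

Definition mutually_independent (R : realType) (d : measure_display)
    (T : measurableType d) (P : probability T R) (I : finType) (J : {set I})
    (X : I -> T -> R) : Prop :=
  forall (F : {set I}) (B : I -> set R),
    F \subset J -> (forall i, measurable (B i)) ->
    P (\bigcap_(i in [set` F]) (X i @^-1` B i)) =
      (\prod_(i in F) P (X i @^-1` B i))%E.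

From HB Require Import structures.
From mathcomp Require Import all_boot all_order all_algebra.
From mathcomp Require Import all_classical all_reals all_analysis.
From mathcomp Require Import ring lra zify measurable_realfun.
Import Order.TTheory GRing.Theory Num.Theory numFieldNormedType.Exports.
Local Open Scope classical_set_scope.
Local Open Scope ring_scope.
Set Implicit Arguments. Unset Strict Implicit.

(* Write a := w / 2 and L := ln n, so that every error has variance c^2 / L.
   By independence P_n = (1 - s_n)^N, where N = n(n-1)/2 is the number of
   pairs and s_n = P(|eps| >= a).  Up to constant factors s_n is a power of n:
   comparing the Gaussian density with that of a slightly wider Gaussian gives
   s_n <= k n^(-(1 - k^-2) alpha), and bounding it from below on [a, r a] gives
   s_n >= K n^(-r^2 alpha), where alpha = a^2 / (2 c^2) exceeds 2 exactly when
   c < w / 4.  If alpha > 2 then N s_n -> 0 and P_n >= 1 - N s_n -> 1; if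
   alpha < 2 then N s_n -> +oo and P_n <= exp (- N s_n) -> 0. *)


Section LnNat.
Variable R : realType.

Lemma ln_nat_gt0 (n : nat) : (2 <= n)%N -> 0 < ln (n%:R : R).
Proof. by move=> n2; apply: ln_gt0; rewrite ltr1n. Qed.

Lemma mul_ln_nat_cvgy (k : R) : 0 < k -> (k * ln (n%:R : R)) @[n --> \oo] --> +oo.
Proof.
move=> k0; apply/cvgryPge => A.
have /cvgryPge/(_ (expR (A / k))) := @cvgr_idn R.
apply: filterS => n hn.
have n0 : 0 < (n%:R : R) by apply: lt_le_trans hn; exact: expR_gt0.
by rewrite -ler_pdivrMl// -ler_expR lnK ?posrE// mulrC.
Qed.

Lemma expR_Nmul_ln_nat_cvg0 (k : R) : 0 < k ->
  expR (- (k * ln (n%:R : R))) @[n --> \oo] --> (0 : R).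
Proof. by move=> k0; apply: (cvg_comp _ _ (mul_ln_nat_cvgy k0) (@cvgr_expR R)). Qed.

Lemma natr_sqr_expR (n : nat) : (0 < n)%N ->
  ((n * n)%:R : R) = expR (ln (n%:R : R) *+ 2).
Proof. by move=> n0; rewrite mulr2n expRD lnK ?posrE ?ltr0n // natrM. Qed.

End LnNat.

Section PowerOneMinus.
Variable R : realType.
Implicit Types (s : R) (N : nat).

Lemma subr1_exprn_ge s N : 0 <= s <= 1 -> 1 - N%:R * s <= (1 - s) ^+ N.
Proof.
case/andP=> s0 s1; elim: N => [|N IH]; first by rewrite mul0r subr0 expr0.
rewrite exprS -natr1.
have : (1 - s) * (1 - N%:R * s) <= (1 - s) * (1 - s) ^+ N.
  by apply: ler_wpM2l; rewrite ?subr_ge0.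
have : 0 <= (N%:R : R) by [].
nra.
Qed.

Lemma subr1_exprn_le_expR s N : 0 <= s <= 1 -> (1 - s) ^+ N <= expR (- (N%:R * s)).
Proof.
case/andP=> s0 s1; rewrite -mulrN expRM_natl.
apply: lerXn2r; rewrite ?nnegrE ?subr_ge0 ?expR_ge0//.
by have := expR_ge1Dx (- s); rewrite addrC.
Qed.

Lemma subr1_exprn_cvg1 (s : nat -> R) (N : nat -> nat) :
  (\forall n \near \oo, 0 <= s n <= 1) ->
  (N n)%:R * s n @[n --> \oo] --> (0 : R) ->
  (1 - s n) ^+ N n @[n --> \oo] --> (1 : R).
Proof.
move=> s01 Ns0.
apply: (@squeeze_cvgr _ _ _ _ (fun n => 1 - (N n)%:R * s n) (fun=> 1)).
- apply: filterS s01 => n sn; rewrite subr1_exprn_ge//=.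
  by case/andP: sn => s0 s1; rewrite exprn_ile1 ?subr_ge0 ?gerBl.
- by rewrite -[X in _ --> X]subr0; apply: cvgB => //; exact: cvg_cst.
- exact: cvg_cst.
Qed.

Lemma subr1_exprn_cvg0 (s : nat -> R) (N : nat -> nat) :
  (\forall n \near \oo, 0 <= s n <= 1) ->
  (N n)%:R * s n @[n --> \oo] --> +oo ->
  (1 - s n) ^+ N n @[n --> \oo] --> (0 : R).
Proof.
move=> s01 Nsy.
apply: (@squeeze_cvgr _ _ _ _ (fun=> 0) (fun n => expR (- ((N n)%:R * s n)))).
- apply: filterS s01 => n sn; rewrite subr1_exprn_le_expR// andbT.
  by case/andP: sn => _ s1; rewrite exprn_ge0 ?subr_ge0.
- exact: cvg_cst.
- by apply: (cvg_comp _ _ Nsy (@cvgr_expR R)).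
Qed.

End PowerOneMinus.

Section NormalTail.
Variable R : realType.
Implicit Types s a b k : R.

Lemma normal_peak_scale k s : 0 < k -> normal_peak (k * s) = k^-1 * normal_peak s.
Proof.
move=> k0; rewrite /normal_peak -invfM; congr (_^-1).
rewrite (_ : (k * s) ^+ 2 * pi *+ 2 = k ^+ 2 * (s ^+ 2 * pi *+ 2)); last by ring.
by rewrite sqrtrM ?sqr_ge0// sqrtr_sqr ger0_norm ?ltW.
Qed.

Lemma measurable_itvoo_compl a : measurable (~` `]-a, a[ : set R).
Proof. by apply: measurableC; exact: measurable_itv. Qed.

(* The density at scale [s] is at most [k * exp(-(1 - k^-2) a^2 / 2 s^2)] times
   the density at scale [k s] outside [(-a, a)], whose total mass is at most 1. *)
Lemma normal_prob_tail_le s a k : 0 < s -> 0 < a -> 1 < k ->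
  (normal_prob 0 s (~` `](- a)%R, a[) <=
    (k * expR (- ((1 - k ^- 2) * (a ^+ 2 / (s ^+ 2 *+ 2)))))%:E)%E.
Proof.
move=> s0 a0 k1; have k0 : 0 < k by lra.
set E := k * expR _.
have E0 : 0 <= E by rewrite mulr_ge0 ?expR_ge0// ltW.
have mA := measurable_itvoo_compl a.
rewrite /normal_prob.
apply: (@le_trans _ _ (\int[lebesgue_measure]_(x in ~` `](- a)%R, a[)
                           (E%:E * (normal_pdf 0 (k * s) x)%:E))%E).
  apply: ge0_le_integral => //.
  - by move=> x _; rewrite lee_fin normal_pdf_ge0.
  - by apply/measurable_EFinP/measurable_funTS; exact: measurable_normal_pdf.
  - apply: emeasurable_funM => //; apply/measurable_EFinP/measurable_funTS.
    exact: measurable_normal_pdf.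
  move=> x /= xa.
  have ax : a ^+ 2 <= x ^+ 2.
    move: xa; rewrite in_itv /= => /negP; rewrite negb_and -!leNgt => /orP[]; nra.
  rewrite -EFinM lee_fin !normal_pdfE ?gt_eqF ?mulr_gt0// normal_peak_scale//.
  rewrite /E /normal_fun.
  have -> : forall u v t : R, k * u * (k^-1 * v * t) = v * (u * t).
    by move=> u v t; field; rewrite gt_eqF.
  rewrite ler_pM2l ?normal_peak_gt0 ?gt_eqF// -expRD ler_expR !subr0 -subr_ge0.
  have k2 : k ^- 2 <= 1 by rewrite invf_le1 ?exprn_gt0// expr_ge1 ?ltW.
  have -> : - ((1 - k ^- 2) * (a ^+ 2 / (s ^+ 2 *+ 2))) +
      - x ^+ 2 / ((k * s) ^+ 2 *+ 2) - - x ^+ 2 / (s ^+ 2 *+ 2) =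
      (1 - k ^- 2) * (x ^+ 2 - a ^+ 2) / (s ^+ 2 *+ 2).
    by field; rewrite ?gt_eqF.
  by apply: divr_ge0; [apply: mulr_ge0; lra | rewrite mulrn_wge0 ?sqr_ge0].
rewrite ge0_integralZl_EFin //; last 2 first.
- by move=> x _; rewrite lee_fin normal_pdf_ge0.
- by apply/measurable_EFinP/measurable_funTS; exact: measurable_normal_pdf.
rewrite -[leRHS]mule1 lee_wpmul2l ?lee_fin//.
exact: (probability_le1 (normal_prob 0 (k * s)) mA).
Qed.

Lemma normal_prob_tail_ge s a b : 0 < s -> 0 <= a -> a < b ->
  (((b - a) * (normal_peak s * expR (- b ^+ 2 / (s ^+ 2 *+ 2))))%:E <=
     normal_prob 0 s (~` `](- a)%R, a[))%E.
Proof.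
move=> s0 a0 ab.
set C := normal_peak s * _.
have C0 : 0 <= C by rewrite mulr_ge0 ?normal_peak_ge0 ?expR_ge0.
apply: (@le_trans _ _ (normal_prob 0 s `[a, b])); last first.
  apply: le_measure; rewrite ?inE; [exact: measurable_itv|exact: measurable_itvoo_compl|].
  move=> x /= /[!in_itv] /= /andP[ax _] /andP[_ xa]; lra.
apply: (@le_trans _ _ (\int[lebesgue_measure]_(x in `[a, b]) cst C%:E x)%E).
  by rewrite integral_cst //= lebesgue_measure_itv /= lte_fin ab -EFinD -EFinM mulrC.
apply: ge0_le_integral => //.
- by apply/measurable_EFinP/measurable_funTS; exact: measurable_normal_pdf.
move=> x /=; rewrite in_itv /= => /andP[ax xb].
rewrite lee_fin normal_pdfE ?gt_eqF// /C /normal_fun ler_pM2l ?normal_peak_gt0 ?gt_eqF//.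
rewrite ler_expR subr0 !mulNr lerN2 ler_pM2r ?invr_gt0 ?mulrn_wgt0 ?exprn_gt0//.
nra.
Qed.

End NormalTail.

Definition normal_tail (R : realType) (s a : R) : R :=
  fine (normal_prob 0 s (~` `](- a)%R, a[)).

Section NormalTailBounds.
Variable R : realType.
Implicit Types s a b c k L : R.

Lemma normal_tailE s a :
  (normal_tail s a)%:E = normal_prob 0 s (~` `](- a)%R, a[).
Proof.
rewrite fineK // ge0_fin_numE ?measure_ge0 //.
exact: le_lt_trans (probability_le1 (normal_prob 0 s) (measurable_itvoo_compl a)) (ltry _).
Qed.

Lemma normal_tail_ge0_le1 s a : 0 <= normal_tail s a <= 1.
Proof.
rewrite -!lee_fin normal_tailE measure_ge0/=.
by have := probability_le1 (normal_prob 0 s) (measurable_itvoo_compl a).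
Qed.

Lemma normal_prob_itvoo s a :
  normal_prob 0 s `](- a)%R, a[ = (1 - normal_tail s a)%:E.
Proof.
have mA := measurable_itvoo_compl a.
by rewrite -[in LHS](setCK `](- a)%R, a[%classic) probability_setC// EFinB normal_tailE.
Qed.

Lemma normal_tail_sqrt_le c a L k : 0 < c -> 0 < a -> 0 < L -> 1 < k ->
  normal_tail (Num.sqrt (c ^+ 2 / L)) a <=
    k * expR (- ((1 - k ^- 2) * (a ^+ 2 / (c ^+ 2 *+ 2)) * L)).
Proof.
move=> c0 a0 L0 k1.
have s0 : 0 < Num.sqrt (c ^+ 2 / L) by rewrite sqrtr_gt0 divr_gt0 ?exprn_gt0.
rewrite -lee_fin normal_tailE; apply: le_trans (normal_prob_tail_le s0 a0 k1) _.
rewrite lee_fin (sqr_sqrtr (divr_ge0 (sqr_ge0 c) (ltW L0))).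
have -> : a ^+ 2 / (c ^+ 2 / L *+ 2) = a ^+ 2 / (c ^+ 2 *+ 2) * L.
  by field; rewrite ?gt_eqF.
by rewrite mulrA.
Qed.

Lemma normal_tail_sqrt_ge c a b L : 0 < c -> 0 <= a -> a < b -> 1 <= L ->
  (b - a) * normal_peak c * expR (- (b ^+ 2 / (c ^+ 2 *+ 2) * L)) <=
    normal_tail (Num.sqrt (c ^+ 2 / L)) a.
Proof.
move=> c0 a0 ab L1; have L0 : 0 < L by lra.
have s0 : 0 < Num.sqrt (c ^+ 2 / L) by rewrite sqrtr_gt0 divr_gt0 ?exprn_gt0.
have s2 : Num.sqrt (c ^+ 2 / L) ^+ 2 = c ^+ 2 / L.
  by rewrite sqr_sqrtr ?divr_ge0 ?sqr_ge0 ?ltW.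
rewrite -lee_fin normal_tailE; apply: le_trans (normal_prob_tail_ge s0 a0 ab).
have ba : 0 <= b - a by rewrite subr_ge0 ltW.
rewrite lee_fin s2 -mulrA ler_wpM2l//.
have -> : - b ^+ 2 / (c ^+ 2 / L *+ 2) = - (b ^+ 2 / (c ^+ 2 *+ 2) * L).
  by field; rewrite ?gt_eqF.
rewrite ler_wpM2r ?expR_ge0// /normal_peak.
rewrite lef_pV2 ?posrE ?sqrtr_gt0 ?mulrn_wgt0 ?mulr_gt0 ?pi_gt0 ?exprn_gt0//.
have c0' := ltW c0.
rewrite s2 ler_sqrt ?mulrn_wge0 ?mulr_ge0 ?sqr_ge0 ?pi_ge0//.
by rewrite ler_pMn2r// ler_pM2r ?pi_gt0// ler_pdivrMr// ler_peMr// sqr_ge0.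
Qed.

End NormalTailBounds.

Section Independence.
Variables (R : realType) (dT : measure_display) (T : measurableType dT).
Variable P : probability T R.

Lemma prob_bigcap_abs_lt (I : finType) (J : {set I}) (X : I -> {RV P >-> R})
    (s a : R) :
  mutually_independent P J (fun i => (X i : T -> R)) ->
  (forall i, i \in J -> distribution P (X i) = normal_prob 0 s) ->
  P (\bigcap_(i in [set` J]) [set t | `|X i t| < a]) =
    ((1 - normal_tail s a) ^+ #|J|)%:E.
Proof.
move=> Xind Xnormal.
have -> : \bigcap_(i in [set` J]) [set t | `|X i t| < a] =
          \bigcap_(i in [set` J]) (X i @^-1` `](- a)%R, a[).
  by apply: eq_bigcapr => i _; apply/seteqP; split => t /=; rewrite in_itv/= ltr_norml.
rewrite Xind ?subxx //.
rewrite (eq_bigr (fun=> (1 - normal_tail s a)%:E)); last first.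
  by move=> i iJ; rewrite -normal_prob_itvoo -(Xnormal i iJ).
by rewrite prodEFin prodr_const.
Qed.

End Independence.

Lemma card_lt_pairs_le n : (#|[set p : 'I_n * 'I_n | (p.1 < p.2)%N]%SET| <= n * n)%N.
Proof. by apply: leq_trans (max_card _) _; rewrite card_prod !card_ord. Qed.

Lemma card_lt_pairs_ge n : (2 <= n)%N ->
  (n * n <= 4 * #|[set p : 'I_n * 'I_n | (p.1 < p.2)%N]%SET|)%N.
Proof.
move=> n2; set A := [set p : 'I_n * 'I_n | (p.1 < p.2)%N]%SET.
have cover : [set: 'I_n * 'I_n]%SET \subset
    (A :|: [set (p.2, p.1) | p in A]) :|: [set (i, i) | i : 'I_n].
  apply/fintype.subsetP => -[i j] _; case: (ltngtP i j) => [ij|ji|/ord_inj ->].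
  - by rewrite !inE ij.
  - by apply/setUP; left; apply/setUP; right; apply/imsetP; exists (j, i); rewrite ?inE.
  - by apply/setUP; right; apply/imsetP; exists j.
have := subset_leq_card cover; rewrite cardsT card_prod !card_ord => le_cover.
have : (n * n <= 2 * #|A| + n)%N.
  apply: leq_trans le_cover (leq_trans (leq_card_setU _ _) _).
  apply: leq_add; last by apply: leq_trans (leq_imset_card _ _) _; rewrite card_ord.
  apply: leq_trans (leq_card_setU _ _) _.
  by rewrite mul2n -addnn leq_add2l leq_imset_card.
nia.
Qed.

Section GaussianTailSum.
Variables (R : realType) (c a : R) (N : nat -> nat).
Local Notation tail n := (normal_tail (Num.sqrt (c ^+ 2 / ln (n%:R : R))) a).
Local Notation alpha := (a ^+ 2 / (c ^+ 2 *+ 2)).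

Lemma card_mul_normal_tail_cvg0 : 0 < c -> 2 * c < a -> (forall n, (N n <= n * n)%N) ->
  (N n)%:R * tail n @[n --> \oo] --> (0 : R).
Proof.
move=> c0 ca N_le; have a0 : 0 < a by lra.
have alpha2 : 2 < alpha by rewrite ltr_pdivlMr ?mulrn_wgt0 ?exprn_gt0// mulr2n !expr2; nra.
have [k k1 k_alpha] : exists2 k, 1 < k & 2 < (1 - k ^- 2) * alpha.
  set u := alpha - 2; have u0 : 0 < u by rewrite subr_gt0.
  have u_alpha : 0 < alpha / u by rewrite divr_gt0//; lra.
  pose k := 1 + alpha / u; have k1 : 1 < k by rewrite /k ltrDl.
  exists k => //; have k0 : 0 < k by lra.
  have uk : u * k = u + alpha by rewrite /k mulrDr mulr1 mulrCA divff ?mulr1 ?gt_eqF.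
  suff : alpha / k ^+ 2 < u by rewrite mulrBl mul1r (mulrC _ alpha) /u; lra.
  by rewrite ltr_pdivrMr ?exprn_gt0//; nra.
set mu := (1 - k ^- 2) * alpha - 2.
have mu0 : 0 < mu by rewrite subr_gt0.
apply: (@squeeze_cvgr _ _ _ _ (fun=> 0) (fun n => k * expR (- (mu * ln (n%:R : R))))).
- near=> n.
  have n2 : (2 <= n)%N by near: n; exact: nbhs_infty_ge.
  have /andP[tail0 _] := normal_tail_ge0_le1 (Num.sqrt (c ^+ 2 / ln (n%:R : R))) a.
  rewrite mulr_ge0//=.
  apply: (@le_trans _ _ ((n * n)%:R * tail n)).
    by rewrite ler_wpM2r// ler_nat.
  have := normal_tail_sqrt_le c0 a0 (@ln_nat_gt0 R n n2) k1.
  move=> /(ler_wpM2l (ler0n R (n * n))) /le_trans; apply.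
  have k0 : 0 <= k by lra.
  rewrite natr_sqr_expR ?(leq_trans _ n2)// mulrCA -expRD ler_wpM2l//.
  by rewrite ler_expR /mu; lra.
- exact: cvg_cst.
- by rewrite -(mulr0 k); apply: cvgMr; exact: expR_Nmul_ln_nat_cvg0.
Unshelve. all: end_near.
Qed.

Lemma card_mul_normal_tail_cvgy : 0 < c -> 0 < a -> a < 2 * c ->
  (forall n, (2 <= n)%N -> (n * n <= 4 * N n)%N) ->
  (N n)%:R * tail n @[n --> \oo] --> +oo.
Proof.
move=> c0 a0 ac N_ge.
have alpha0 : 0 < alpha by rewrite divr_gt0 ?mulrn_wgt0 ?exprn_gt0.
have alpha2 : alpha < 2.
  have : a * a < 2 * c * (2 * c) by apply: ltr_pM; lra.
  by rewrite ltr_pdivrMr ?mulrn_wgt0 ?exprn_gt0// mulr2n !expr2; lra.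
have alpha20 : 0 < 2 + alpha by lra.
set al := alpha in alpha0 alpha2 alpha20.
(* [r ^ 2 * al < 2] amounts to [0 < (al - 2) ^ 2] *)
pose r := 4 / (2 + al); have r1 : 1 < r by rewrite /r ltr_pdivlMr; lra.
pose beta := r ^+ 2 * al.
have beta2 : beta < 2.
  rewrite /beta /r (_ : (4 / (2 + al)) ^+ 2 * al = 16 * al / (2 + al) ^+ 2).
    have sq : 0 < (al - 2) ^+ 2 by rewrite exprn_even_gt0//= subr_eq0 lt_eqF.
    rewrite ltr_pdivrMr ?exprn_gt0//.
    by rewrite !expr2 in sq *; lra.
  by field; rewrite gt_eqF.
have ra : a < r * a by rewrite ltr_pMl.
pose K := (r - 1) * a * normal_peak c.
have K0 : 0 < K by rewrite !mulr_gt0 ?normal_peak_gt0 ?gt_eqF ?subr_gt0.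
apply: (@ger_cvgy _ _ _ _ (fun n => K / 4 * (2 - beta) * ln (n%:R : R))); last first.
  by apply: mul_ln_nat_cvgy; apply: mulr_gt0; [exact: divr_gt0 | rewrite subr_gt0].
near=> n.
have n2 : (2 <= n)%N by near: n; exact: nbhs_infty_ge.
have L1 : 1 <= ln (n%:R : R).
  near: n; have /cvgryPge/(_ 1) := mul_ln_nat_cvgy (@ltr01 R).
  by apply: filterS => n; rewrite mul1r.
have tail_ge := normal_tail_sqrt_ge c0 (ltW a0) ra L1.
rewrite (_ : (r * a) ^+ 2 / (c ^+ 2 *+ 2) = beta) in tail_ge; last first.
  by rewrite /beta /al; field; rewrite gt_eqF.
move: tail_ge; set L := ln (n%:R : R) => tail_ge.
apply: (@le_trans _ _ (K / 4 * expR ((2 - beta) * L))).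
  rewrite -mulrA; apply: ler_wpM2l; first by rewrite divr_ge0// ltW.
  by have := expR_ge1Dx ((2 - beta) * L); lra.
apply: (@le_trans _ _ ((n * n)%:R / 4 * (K * expR (- (beta * L))))).
  rewrite natr_sqr_expR ?(leq_trans _ n2)// -/L.
  rewrite (_ : (2 - beta) * L = L *+ 2 + - (beta * L)) ?expRD; last by ring.
  by rewrite le_eqVlt; apply/orP; left; apply/eqP; ring.
have N0 : 0 <= K * expR (- (beta * L)) by rewrite mulr_ge0 ?expR_ge0// ltW.
apply: (@le_trans _ _ ((N n)%:R * (K * expR (- (beta * L))))).
  rewrite ler_wpM2r// ler_pdivrMr// mulrC.
  by have := N_ge n n2; rewrite -(ler_nat R) !natrM.
rewrite ler_wpM2l//; apply: le_trans tail_ge.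
by rewrite /K (_ : r * a - a = (r - 1) * a) ?mulrA//; ring.
Unshelve. all: end_near.
Qed.

End GaussianTailSum.

Theorem proposition1 (R : realType) (w c : R)
  (V : nat -> finType) (e : forall n, rel (V n))
  (phi : forall n, 'I_n -> V n) (l : forall n, V n -> V n -> R)
  (dist : forall n, 'I_n -> 'I_n -> R)
  (dT : measure_display) (T : nat -> measurableType dT)
  (P : forall n, probability (T n) R)
  (eps : forall n, 'I_n * 'I_n -> {RV P n >-> R}) :
  0 < w -> 0 < c ->
  (forall n, (3 <= n)%N -> binary_phylo_tree (e n) (phi n)) ->
  (forall n, (3 <= n)%N -> positive_edge_lengths (e n) (l n)) ->
  (forall n, (3 <= n)%N -> min_interior_edge_length (e n) (l n) w) ->
  (forall n, (3 <= n)%N -> is_tree_metric (e n) (phi n) (l n) (dist n)) ->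
  (forall n, (3 <= n)%N ->
     mutually_independent (P n) [set p : 'I_n * 'I_n | (p.1 < p.2)%N]%SET
       (fun p => (eps n p : T n -> R))) ->
  (forall n, (3 <= n)%N -> forall p : 'I_n * 'I_n, (p.1 < p.2)%N ->
     distribution (P n) (eps n p) =
       normal_prob 0 (Num.sqrt (c ^+ 2 / ln (n%:R : R)))) ->
  let Pn := fun n : nat =>
    P n (\bigcap_(p in [set p : 'I_n * 'I_n | (p.1 < p.2)%N])
           [set t | `| (dist n p.1 p.2 + eps n p t) - dist n p.1 p.2 | < w / 2]) in
  (w / 4 < c -> Pn @ \oo --> (0 : R)%:E) /\ (c < w / 4 -> Pn @ \oo --> (1 : R)%:E).
Proof.
move=> w0 c0 _ _ _ _ indep normal Pn.
pose N n := #|[set p : 'I_n * 'I_n | (p.1 < p.2)%N]%SET|.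
pose s n := normal_tail (Num.sqrt (c ^+ 2 / ln (n%:R : R))) (w / 2).
have PnE : \forall n \near \oo, Pn n = ((1 - s n) ^+ N n)%:E.
  near=> n; have n3 : (3 <= n)%N by near: n; exact: nbhs_infty_ge.
  have normalA p : p \in [set p : 'I_n * 'I_n | (p.1 < p.2)%N]%SET ->
      distribution (P n) (eps n p) = normal_prob 0 (Num.sqrt (c ^+ 2 / ln (n%:R : R))).
    by rewrite inE; exact: normal.
  rewrite -(prob_bigcap_abs_lt (w / 2) (indep n n3) normalA).
  congr (P n _); apply/seteqP; split=> t /= + p => /(_ p) + pA.
    by rewrite /= inE in pA => /(_ pA); rewrite /= addrC addKr.
  by rewrite /= inE => /(_ pA); rewrite /= addrC addKr.
have s01 : \forall n \near \oo, 0 <= s n <= 1 by apply: nearW => n; exact: normal_tail_ge0_le1.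
suff cvgPn (lim : R) : (1 - s n) ^+ N n @[n --> \oo] --> lim -> Pn @ \oo --> lim%:E.
  split=> cw; apply: cvgPn.
  - apply: subr1_exprn_cvg0 s01 _; apply: card_mul_normal_tail_cvgy; try lra.
    exact: card_lt_pairs_ge.
  - apply: subr1_exprn_cvg1 s01 _; apply: card_mul_normal_tail_cvg0; try lra.
    exact: card_lt_pairs_le.
move=> cvg_lim; apply: cvg_EFin; first by apply: filterS PnE => n ->.
by apply: cvg_trans cvg_lim; apply: near_eq_cvg; apply: filterS PnE => n /= ->.
Unshelve. all: end_near.
Qed.
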